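(* For $n\ge 3$, the cycle $C_n$ satisfies $\nu_*(C_n)=6n-4$.
   Context: For a finite simple graph $G=(V,E)$ with $\ell=|V|+|E|$, a construction sequence (c-sequence) is a bijection $x:\{1,\dots,\ell\}\to V\sqcup E$ such that every edge $e=uw$ satisfies $x^{-1}(e)>\max\{x^{-1}(u),x^{-1}(w)\}$. The cost of $x$ is $\nu(x)=\sum_{e=uw\in E}\big(2x^{-1}(e)-x^{-1}(u)-x^{-1}(w)\big)$, and $\nu_*(G)$ is the minimum of $\nu(x)$ over all c-sequences for $G$. $C_n$ is the cycle on $n$ vertices. *)

From mathcomp Require Import all_boot.
Set Implicit Arguments. Unset Strict Implicit. Unset Printing Implicit Defensive.

Section CSeq.
Variables (V : finType) (adj : rel V).

Definition is_edge (A : {set V}) : bool :=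
  [exists u, exists w, adj u w && (A == [set u; w])].

Definition edge := {A : {set V} | is_edge A}.

Definition elt := (V + edge)%type.

Definition len : nat := #|{: V}| + #|{: edge}|.

(* 1-based position x^{-1}(t) of t under a map x : {1..ℓ} -> V ⊔ E
   (positions are encoded as 'I_len, position i meaning i+1). *)
Definition pos (x : 'I_len -> elt) (t : elt) : nat :=
  if [pick i | x i == t] is Some i then (val i).+1 else 0.

Definition cseq (x : 'I_len -> elt) : Prop :=
  bijective x /\
  forall (e : edge) (u : V), u \in val e -> pos x (inl u) < pos x (inr e).

Definition cost (x : 'I_len -> elt) : nat :=
  \sum_(e : edge) \sum_(u in val e) (pos x (inr e) - pos x (inl u)).

Definition is_nu_star (m : nat) : Prop :=
  (exists x, cseq x /\ cost x = m) /\ (forall x, cseq x -> m <= cost x).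

End CSeq.

Definition cycle_adj (n : nat) : rel 'I_n :=
  fun i j => (val j == (val i).+1 %% n) || (val i == (val j).+1 %% n).

(* Let y be the inverse of a c-sequence of C_n, i.e. 0-based positions.  Every
   edge has two ends and every vertex lies on two edges, so
   nu = 2 sum_e y(e) - 2 sum_v y(v); as the positions are 0, ..., 2n-1 this gives
   nu + 4 sum_v y(v) = 2n(2n-1).  If r vertices precede v, the edges preceding v
   join vertices of this proper subset of the cycle, so there are at most r-1 of
   them and y(v) <= 2r-1.  Summing over the ranks r = 0, ..., n-1 gives
   sum_v y(v) <= (n-1)^2, i.e. nu >= 6n-4, with equality for the sequence
   v_0 v_1 e_0 v_2 e_1 ... v_(n-1) e_(n-2) e_(n-1), where e_k = {v_k, v_(k+1)}. *)

From mathcomp Require Import all_boot zify.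
Set Implicit Arguments. Unset Strict Implicit. Unset Printing Implicit Defensive.

Section Rank.
Variables (T : finType) (f : T -> nat).

Definition rank (t : T) : nat := #|[set s | f s < f t]|.

Lemma rank_lt_card t : rank t < #|T|.
Proof.
rewrite -cardsT; apply: proper_card; rewrite properT.
by apply: contraTneq (in_setT t) => <-; rewrite inE ltnn.
Qed.

Lemma rank_mono s t : f s < f t -> rank s < rank t.
Proof.
move=> lt_st; apply: proper_card; apply/properP; split.
  by apply/subsetP=> r; rewrite !inE => /ltn_trans; apply.
by exists s; rewrite !inE ?ltnn.
Qed.

Lemma rank_inj : injective f -> injective rank.
Proof.
move=> inj_f s t eq_st; apply: inj_f.
by case: (ltngtP (f s) (f t)) => // /rank_mono; rewrite eq_st ltnn.
Qed.

Lemma sum_rank (F : nat -> nat) :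
  injective f -> \sum_t F (rank t) = \sum_(i < #|T|) F i.
Proof.
move=> inj_f; pose r t : 'I_#|T| := Ordinal (rank_lt_card t).
have r_inj : injective r by move=> s t /(congr1 val) /(rank_inj inj_f).
have r_bij : bijective r by apply: inj_card_bij r_inj _; rewrite card_ord.
by rewrite (reindex r) //; apply: onW_bij.
Qed.

End Rank.

Lemma card_ltn_ord N (k : nat) : k <= N -> #|[set i : 'I_N | i < k]| = k.
Proof.
move=> le_kN; rewrite -sum1_card (eq_bigl (fun i : 'I_N => i < k)) => [|i].
  by rewrite big_ord_narrow // big_const_ord iter_addn_0 mul1n.
by rewrite inE.
Qed.

Lemma rank_bij (T : finType) N (y : T -> 'I_N) t :
  bijective y -> rank (fun s => y s : nat) t = y t.
Proof.
move=> y_bij; rewrite /rank -(card_imset _ (bij_inj y_bij)).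
rewrite -[RHS](card_ltn_ord (ltnW (ltn_ord (y t)))).
apply: eq_card => i; rewrite inE; case: y_bij => z yK zK.
apply/imsetP/idP => [[s] | lt_i]; first by rewrite inE => lt_s ->.
by exists (z i); rewrite ?inE zK.
Qed.

Lemma card_sum_set (T1 T2 : finType) (A : {set T1 + T2}) :
  #|A| = #|[set a | inl a \in A]| + #|[set b | inr b \in A]|.
Proof.
rewrite -!sum1_card !(big_mkcond (fun t => t \in _)) big_sumType /=.
by congr (_ + _); apply: eq_bigr => t _; rewrite inE.
Qed.

Lemma sum_double_pred m : \sum_(i < m) i.*2.-1 = m.-1 ^ 2.
Proof.
elim: m => [|m IHm]; first by rewrite big_ord0.
by rewrite big_ord_recr /= IHm; case: m {IHm} => //= m; lia.
Qed.

Lemma bin2_double m : 'C(m.*2, 2) = m * m.*2.-1.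
Proof. by rewrite bin2 -doubleMl doubleK. Qed.

Section Positions.
Variables (V : finType) (adj : rel V).
Variables (x : 'I_(len adj) -> elt adj) (y : elt adj -> 'I_(len adj)).
Hypotheses (xK : cancel x y) (yK : cancel y x).

Lemma pos_cancel t : pos x t = (y t).+1.
Proof.
rewrite /pos; case: pickP => [i /eqP <- | no_i]; first by rewrite xK.
by have := no_i (y t); rewrite yK eqxx.
Qed.

Lemma cseq_cancel :
  cseq x <-> forall (e : edge adj) u, u \in val e -> y (inl u) < y (inr e).
Proof.
rewrite /cseq; split => [[_ before] e u | before]; last first.
  by split=> [|e u ue]; [exact: Bijective xK yK | rewrite !pos_cancel ltnS before].
by move=> /before; rewrite !pos_cancel.
Qed.

Lemma cost_add_endpoints : cseq x ->
  cost x + \sum_(e : edge adj) \sum_(u in val e) y (inl u)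
  = \sum_(e : edge adj) #|val e| * y (inr e).
Proof.
move=> /cseq_cancel before; rewrite -big_split; apply: eq_bigr => e _ /=.
rewrite -big_split -sum_nat_const; apply: eq_bigr => u ue /=.
by rewrite !pos_cancel subSS subnK // ltnW // before.
Qed.

Lemma sum_positions :
  \sum_v y (inl v) + \sum_(e : edge adj) y (inr e) = 'C(len adj, 2).
Proof.
rewrite -bin2_sum big_mkord (reindex y) ?big_sumType //.
by apply: onW_bij; exact: Bijective yK xK.
Qed.

Lemma position_split v :
  (y (inl v) : nat) = rank (fun u => y (inl u) : nat) v
                      + #|[set e : edge adj | y (inr e) < y (inl v)]|.
Proof.
rewrite -[LHS](rank_bij _ (Bijective yK xK)) /rank card_sum_set.
by congr (_ + _); apply: eq_card => t; rewrite !inE.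
Qed.

End Positions.

Lemma ordSE n (k : 'I_n) : (ordS k : nat) = if k.+1 == n then 0 else k.+1.
Proof.
rewrite /=; case: eqP => [-> | ne]; first exact: modnn.
by rewrite modn_small // ltn_neqAle ltn_ord andbT; apply/eqP.
Qed.

Lemma iter_ordS n (k : 'I_n) m : val (iter m (@ordS n) k) = (k + m) %% n.
Proof.
elim: m => [|m IHm] /=; first by rewrite addn0 modn_small.
by rewrite IHm addnS -addn1 modnDml addn1.
Qed.

Lemma ordS_closed n (S : {set 'I_n}) k :
  k \in S -> {in S, forall j, ordS j \in S} -> S = setT.
Proof.
move=> kS closedS; apply/setP=> j; rewrite inE.
have iterS m : iter m (@ordS n) k \in S by elim: m => //= m; apply: closedS.
suff -> : j = iter (j + (n - k)) (@ordS n) k by exact: iterS.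
apply: val_inj; rewrite iter_ordS addnCA subnKC ?(ltnW (ltn_ord k)) //.
by rewrite modnDr modn_small.
Qed.

Lemma card_ordS_inner n (S : {set 'I_n}) :
  S != setT -> #|[set k in S | ordS k \in S]| <= #|S|.-1.
Proof.
move=> S_proper; have [-> | [k kS]] := set_0Vmem S.
  by rewrite cards0 leqn0 cards_eq0 -subset0; apply/subsetP=> k; rewrite !inE.
have [j jS jS'] : exists2 j, j \in S & ordS j \notin S.
  apply/exists_inP; apply: contraR S_proper => /exists_inPn closedS.
  by apply/eqP; apply: (ordS_closed kS) => j /closedS; rewrite negbK.
have S_gt0 : 0 < #|S| by apply/card_gt0P; exists k.
rewrite -ltnS (ltn_predK S_gt0).
apply: proper_card; apply/properP; split.
  by apply/subsetP=> i; rewrite inE => /andP[].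
by exists j; rewrite // inE jS (negbTE jS').
Qed.

Section Cycle.
Variable n : nat.
Hypothesis n_gt2 : 2 < n.

Local Notation cedge := (edge (@cycle_adj n)).
Local Notation L := (len (@cycle_adj n)).

Lemma ordS_neq (k : 'I_n) : ordS k != k.
Proof. by apply/eqP => /(congr1 (@nat_of_ord n)); rewrite ordSE; case: eqP; lia. Qed.

Lemma ordS2_neq (k : 'I_n) : ordS (ordS k) != k.
Proof.
apply/eqP => /(congr1 (@nat_of_ord n)); rewrite !ordSE.
by have := ltn_ord k; case: eqP; case: eqP => //=; lia.
Qed.

Lemma cycle_edgeP (k : 'I_n) : is_edge (@cycle_adj n) [set k; ordS k].
Proof.
by apply/existsP; exists k; apply/existsP; exists (ordS k); rewrite /cycle_adj !eqxx.
Qed.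

Definition edge_of (k : 'I_n) : cedge := exist (is_edge _) _ (cycle_edgeP k).

Lemma edge_of_inj : injective edge_of.
Proof.
move=> a b /(congr1 val) /= eq_ab.
have : a \in [set b; ordS b] by rewrite -eq_ab set21.
rewrite !inE => /orP[/eqP // | /eqP a_Sb].
have : ordS a \in [set b; ordS b] by rewrite -eq_ab set22.
rewrite !inE => /orP[/eqP Sa_b | /eqP /ordS_inj //].
by have := ordS2_neq b; rewrite -a_Sb Sa_b eqxx.
Qed.

Lemma edge_of_surj (e : cedge) : exists k, e = edge_of k.
Proof.
case: e => A A_edge; have /existsP[u /existsP[w /andP[uw /eqP defA]]] := A_edge.
case/orP: uw => /eqP uw_succ; [exists u | exists w]; apply: val_inj; rewrite /= defA.
  by rewrite (_ : w = ordS u) //; exact: val_inj.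
by rewrite setUC (_ : u = ordS w) //; exact: val_inj.
Qed.

Let k0 : 'I_n := Ordinal (ltnW (ltnW n_gt2)).

Definition edge_index (e : cedge) : 'I_n := odflt k0 [pick k | edge_of k == e].

Lemma edge_indexK : cancel edge_index edge_of.
Proof.
move=> e; rewrite /edge_index; case: pickP => [k /eqP // | no_k].
by have [k def_e] := edge_of_surj e; have := no_k k; rewrite def_e eqxx.
Qed.

Lemma edge_ofK : cancel edge_of edge_index.
Proof. by move=> k; apply: edge_of_inj; rewrite edge_indexK. Qed.

Lemma sum_cycle_edges (F : cedge -> nat) : \sum_e F e = \sum_k F (edge_of k).
Proof.
by rewrite (reindex edge_of) //; apply: onW_bij; exact: Bijective edge_ofK edge_indexK.
Qed.

Lemma len_cycle : len (@cycle_adj n) = n.*2.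
Proof.
rewrite /len card_ord -addnn; congr (_ + _).
by rewrite (bij_eq_card (Bijective edge_indexK edge_ofK)) card_ord.
Qed.

Lemma sum_edge_of (F : 'I_n -> nat) k :
  \sum_(u in val (edge_of k)) F u = F k + F (ordS k).
Proof. by rewrite big_setU1 ?big_set1 // inE eq_sym ordS_neq. Qed.

Lemma card_edge_of k : #|val (edge_of k)| = 2.
Proof. by rewrite cards2 eq_sym ordS_neq. Qed.

Section Inverse.
Variables (x : 'I_L -> elt (@cycle_adj n)) (y : elt (@cycle_adj n) -> 'I_L).
Hypotheses (xK : cancel x y) (yK : cancel y x).

Lemma cost_cycle : cseq x -> cost x + 4 * \sum_v y (inl v) = n.*2 * n.*2.-1.
Proof.
have shift : \sum_k (y (inl (ordS k)) : nat) = \sum_k (y (inl k) : nat).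
  by rewrite [RHS](reindex_inj (@ordS_inj n)).
move=> cseq_x; have := cost_add_endpoints xK yK cseq_x.
rewrite !sum_cycle_edges.
under eq_bigr do rewrite sum_edge_of.
under [RHS]eq_bigr do rewrite card_edge_of.
rewrite big_split /= shift -big_distrr /= => cost_eq.
have := sum_positions xK yK.
rewrite sum_cycle_edges (_ : 'C(L, 2) = 'C(n.*2, 2)) ?len_cycle // bin2_double.
set SV := \sum_(i < n) (y (inl i) : nat) in cost_eq *.
set SE := \sum_(i < n) (y (inr (edge_of i)) : nat) in cost_eq *.
lia.
Qed.

Lemma vertex_position_le v : cseq x ->
  y (inl v) <= (rank (fun u => y (inl u) : nat) v).*2.-1.
Proof.
move=> /(cseq_cancel xK yK) before; rewrite (position_split xK yK) /rank.
set S := [set u | y (inl u) < y (inl v)].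
have S_proper : S != setT by apply: contraTneq (in_setT v) => <-; rewrite inE ltnn.
have edges_inside : #|[set e : cedge | y (inr e) < y (inl v)]|
                    <= #|[set k in S | ordS k \in S]|.
  rewrite -[#|[set k in S | _]|](card_imset _ edge_of_inj).
  apply: subset_leq_card.
  apply/subsetP=> e; rewrite inE => lt_ev; have [k def_e] := edge_of_surj e.
  apply/imsetP; exists k; rewrite // !inE; subst e.
  by rewrite !(ltn_trans (before _ _ _) lt_ev) // !inE eqxx ?orbT.
have := leq_add (leqnn #|S|) (leq_trans edges_inside (card_ordS_inner S_proper)).
by move/leq_trans; apply; set s := #|S|; lia.
Qed.

Lemma sum_vertex_positions_le : cseq x -> \sum_v y (inl v) <= n.-1 ^ 2.
Proof.
move=> cseq_x; have y_inj : injective (fun u => y (inl u) : nat).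
  by move=> u v /ord_inj /(can_inj yK) [].
rewrite -sum_double_pred; have := sum_rank (fun i => i.*2.-1) y_inj.
rewrite card_ord => <-.
by apply: leq_sum => v _; exact: vertex_position_le.
Qed.

Lemma cost_lower : cseq x -> 6 * n - 4 <= cost x.
Proof.
move=> cseq_x; have := cost_cycle cseq_x; have := sum_vertex_positions_le cseq_x.
lia.
Qed.

End Inverse.

(* Positions in v_0 v_1 e_0 v_2 e_1 ... v_(n-1) e_(n-2) e_(n-1). *)
Definition tour_pos (t : elt (@cycle_adj n)) : nat :=
  match t with
  | inl v => (v : nat).*2.-1
  | inr e => let k := edge_index e in
             if k.+1 == n then n.*2.-1 else (k : nat).*2.+2
  end.

Lemma tour_pos_lt t : tour_pos t < L.
Proof.
rewrite len_cycle; case: t => [v | e] /=; first by have := ltn_ord v; lia.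
by have := ltn_ord (edge_index e); case: eqP; lia.
Qed.

Lemma tour_pos_inj : injective tour_pos.
Proof.
have idx_lt := ltn_ord (edge_index _).
case=> [u | e] [v | f] /=.
- move=> eq_uv; congr inl; apply: ord_inj.
  by have := ltn_ord u; have := ltn_ord v; lia.
- by have := ltn_ord u; have := idx_lt f; case: eqP; lia.
- by have := ltn_ord v; have := idx_lt e; case: eqP; lia.
move=> eq_ef; congr inr; apply: (can_inj edge_indexK); apply: ord_inj.
by move: eq_ef; have := idx_lt e; have := idx_lt f; do 2!case: eqP; lia.
Qed.

Lemma tour_pos_edge k u :
  u \in val (edge_of k) -> tour_pos (inl u) < tour_pos (inr (edge_of k)).
Proof.
rewrite /= !inE edge_ofK => /orP[] /eqP ->; rewrite ?ordSE;
  by have := ltn_ord k; case: eqP; lia.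
Qed.

Lemma cost_upper :
  exists x : 'I_L -> elt (@cycle_adj n), cseq x /\ cost x = 6 * n - 4.
Proof.
pose y t : 'I_L := Ordinal (tour_pos_lt t).
have y_inj : injective y by move=> s t /(congr1 val) /tour_pos_inj.
have [x yK xK] : bijective y.
  by apply: inj_card_bij y_inj _; rewrite card_ord card_sum.
have cseq_x : cseq x.
  apply/(cseq_cancel xK yK) => e u.
  by have [k ->] := edge_of_surj e; exact: tour_pos_edge.
exists x; split => //; have := cost_cycle xK yK cseq_x.
have -> : \sum_v (y (inl v) : nat) = n.-1 ^ 2 by rewrite -sum_double_pred.
lia.
Qed.

End Cycle.

Theorem theorem10 (n : nat) : 3 <= n -> @is_nu_star 'I_n (@cycle_adj n) (6 * n - 4).
Proof.
move=> n_gt2; split; first exact: cost_upper.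
by move=> x cseq_x; case: (cseq_x) => [[y xK yK] _]; exact: cost_lower xK yK cseq_x.
Qed.
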